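(* Let $L$ be a free $O_p$-module of finite rank $t$, $\xi:L\to L$ an $O_p$-linear endomorphism, and $K\subseteq L$ an $O_p[\xi]$-submodule with $\xi(K)\subseteq p^nL$ and $L/K\cong\bigoplus_{i=1}^{t}O_p/p^{a_i}O_p$ with $n\ge a_1\ge a_2\ge\dots\ge a_t\ge0$. Put $b_i=n-a_i$ and $B(j)=\sum_{i=1}^jb_i$. Write the characteristic polynomial of $\xi$ on $L$ as $\det(X-\xi)=\sum_{s=0}^td_sX^{t-s}$. Then $d_s\equiv0\bmod p^{B(s)}$ for all $0\le s\le t$.
   Context: $O_p$ is the completion at $p$ of the ring of integers $O$ of an imaginary quadratic field in which the odd rational prime $p$ is inert (a complete discrete valuation ring with uniformizer $p$). *)

From HB Require Import structures.
From mathcomp Require Import all_boot all_order all_algebra.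
Set Implicit Arguments. Unset Strict Implicit. Unset Printing Implicit Defensive.
Import Order.TTheory GRing.Theory Num.Theory.
Local Open Scope ring_scope.

Definition divr {R : comNzRingType} (y x : R) : Prop := exists c : R, x = y * c.

(* The ring R is (isomorphic to) O_p, the completion at an inert odd prime p
   of the ring of integers of an imaginary quadratic field.  Such a ring is
   characterized (Cohen structure theorem / Witt vectors W(F_{p^2})) by:
   - R is a discrete valuation ring with uniformizer p
     (p is a nonzero non-unit and every nonzero element is a unit times a
      power of p);
   - R is complete for the p-adic topology;
   - the residue field R/pR has exactly p^2 elements (p inert).  *)
Definition is_Op (p : nat) (R : idomainType) : Prop :=
  [/\ prime p /\ odd p,
      (p%:R : R) != 0 /\ (p%:R : R) \isn't a GRing.unit,
      (forall x : R, x != 0 ->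
          exists (u : R) (k : nat), u \is a GRing.unit /\ x = u * (p%:R) ^+ k),
      (forall u : nat -> R,
          (forall k, divr ((p%:R : R) ^+ k) (u k.+1 - u k)) ->
          exists x : R, forall k, divr ((p%:R : R) ^+ k) (x - u k))
    &
      (exists s : seq R, [/\ size s = (p ^ 2)%N,
          (forall x : R, exists2 y, y \in s & divr (p%:R : R) (x - y)) &
          (forall i j, (i < size s)%N -> (j < size s)%N ->
             divr (p%:R : R) (nth 0 s i - nth 0 s j) -> i = j)])].

(* The submodule D = ⊕_i p^{a_i} R of R^t, so that R^t / D = ⊕_i R/p^{a_i}R *)
Definition in_diag_sub {R : comNzRingType} (p : nat) (t : nat) (a : 'I_t -> nat)
  (x : 'rV[R]_t) : Prop := forall i : 'I_t, divr ((p%:R : R) ^+ a i) (x 0 i).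

(* Let b_i = n - a_i and call x "good" if p^B(s) divides x * d_s; good
   elements form an ideal.  If the rows y_i of a matrix Y satisfy
   p^a_i y_i \in K, then xi(K) <= p^n L makes the i-th row of Y xi divisible
   by p^b_i, and expanding det Y * det(X - xi) = det(X Y - Y xi) by Leibniz
   shows that det Y is good: as the b_i increase, any s factors taken from
   the Y xi side contribute at least p^B(s).  Now lift the generators of
   L/K to v_i, so that p^a_i v_i \in K and L = sum_i O_p v_i + K, and expand
   det 1 multilinearly along this decomposition of each row: a term either
   has two equal rows, or its rows are distinct v_i's and elements of K, so
   that after permuting rows it is of the previous kind.  Hence det 1 = 1 is
   good. *)

From HB Require Import structures.
From mathcomp Require Import all_boot all_order all_algebra perm.
Set Implicit Arguments. Unset Strict Implicit. Unset Printing Implicit Defensive.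
Import Order.TTheory GRing.Theory Num.Theory.
Local Open Scope ring_scope.

Section Divisibility.
Variable R : comNzRingType.
Implicit Types (q x y u w c : R) (k l : nat).

Lemma dvd1r u : divr 1 u. Proof. by exists u; rewrite mul1r. Qed.

Lemma dvdr0 y : divr y 0. Proof. by exists 0; rewrite mulr0. Qed.

Lemma dvdrD y u w : divr y u -> divr y w -> divr y (u + w).
Proof. by move=> [c ->] [e ->]; exists (c + e); rewrite mulrDr. Qed.

Lemma dvdrN y u : divr y u -> divr y (- u).
Proof. by move=> [c ->]; exists (- c); rewrite mulrN. Qed.

Lemma dvdrB y u w : divr y u -> divr y w -> divr y (u - w).
Proof. by move=> du dw; apply/dvdrD/dvdrN. Qed.

Lemma dvdr_mulr y u c : divr y u -> divr y (u * c).
Proof. by move=> [e ->]; exists (e * c); rewrite mulrA. Qed.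

Lemma dvdr_mull y u c : divr y u -> divr y (c * u).
Proof. by rewrite mulrC; apply: dvdr_mulr. Qed.

Lemma dvdr_sum y (I : Type) (r : seq I) (P : pred I) (F : I -> R) :
  (forall i, P i -> divr y (F i)) -> divr y (\sum_(i <- r | P i) F i).
Proof.
move=> dF; elim/big_rec: _ => [|i s Pi ds]; first exact: dvdr0.
exact/dvdrD/ds/dF.
Qed.

Lemma dvdr_exp_le q k l u : (k <= l)%N -> divr (q ^+ l) u -> divr (q ^+ k) u.
Proof.
by move=> kl [c ->]; exists (q ^+ (l - k) * c); rewrite mulrA -exprD subnKC.
Qed.

Lemma dvdr_mul_exp q k l u w :
  divr (q ^+ k) u -> divr (q ^+ l) w -> divr (q ^+ (k + l)) (u * w).
Proof. by move=> [c ->] [e ->]; exists (c * e); rewrite exprD mulrACA. Qed.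

End Divisibility.

Lemma coef_prod_dvdr (R : comNzRingType) (q : R) (al be : nat -> R)
    (b : nat -> nat) (m : nat) :
  (forall i j, (i <= j < m)%N -> (b i <= b j)%N) ->
  (forall i, (i < m)%N -> divr (q ^+ b i) (be i)) ->
  forall s, (s <= m)%N ->
  divr (q ^+ (\sum_(i < s) b i))
       ((\prod_(i < m) ('X * (al i)%:P - (be i)%:P))`_(m - s)).
Proof.
elim: m => [|m IH] b_mono dvd_be [|s] le_sm; rewrite ?big_ord0 ?expr0.
- exact: dvd1r.
- by [].
- exact: dvd1r.
have {}IH : forall s, (s <= m)%N -> divr (q ^+ (\sum_(i < s) b i))
    ((\prod_(i < m) ('X * (al i)%:P - (be i)%:P))`_(m - s)).
  apply: IH => [i j /andP[ij jm]|i im]; first by apply: b_mono; rewrite ij ltnW.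
  by apply: dvd_be; rewrite ltnW.
rewrite [in X in divr _ X]big_ord_recr /= mulrBr coefB mulrA.
rewrite coefMC coefMX coefMC subSS.
apply: dvdrB.
  case: eqP => [_|/eqP]; first by rewrite mul0r; apply: dvdr0.
  rewrite subn_eq0 -ltnNge => lt_sm.
  by apply/dvdr_mulr; rewrite -subnS; apply: IH.
rewrite big_ord_recr /=; apply: dvdr_mul_exp; first exact: IH.
apply: (@dvdr_exp_le _ _ _ (b m)); last exact: dvd_be.
by apply: b_mono; rewrite -ltnS le_sm /=.
Qed.

Lemma det_mul_char_poly_coef_dvdr (R : comNzRingType) (t : nat) (q : R)
    (b : 'I_t -> nat) (Y xi : 'M[R]_t) :
  (forall i j : 'I_t, (i <= j)%N -> (b i <= b j)%N) ->
  (forall i j, divr (q ^+ b i) ((Y *m xi) i j)) ->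
  forall s, (s <= t)%N ->
  divr (q ^+ (\sum_(i < t | (i < s)%N) b i)) (\det Y * (char_poly xi)`_(t - s)).
Proof.
move=> b_mono dvd_Yxi s le_st.
have det_char : (\det Y)%:P * char_poly xi =
    \det ('X *: map_mx polyC Y - map_mx polyC (Y *m xi)).
  by rewrite -det_map_mx -det_mulmx mulmxBr mul_mx_scalar map_mxM.
pose b' k := if insub k is Some i then b i else 0%N.
have -> : (\sum_(i < t | (i < s)%N) b i = \sum_(i < s) b' i)%N.
  rewrite -(big_mkord xpredT b') (big_nat_widen _ _ _ _ _ le_st) big_mkord.
  by apply: eq_big => // i _; rewrite /b' valK.
rewrite -coefCM det_char /determinant coef_sum; apply: dvdr_sum => sigma _.
rewrite -(rmorph_sign polyC) coefCM; apply: dvdr_mull.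
pose al k := if insub k is Some i then Y i (sigma i) else 0.
pose be k := if insub k is Some i then (Y *m xi) i (sigma i) else 0.
rewrite (eq_bigr (fun i : 'I_t => 'X * (al i)%:P - (be i)%:P)); last first.
  by move=> i _; rewrite /al /be valK !mxE mulrC.
apply: coef_prod_dvdr => // [i j /andP[ij jt]|i it].
  have it := leq_ltn_trans ij jt.
  by rewrite /b' (insubT (gtn t) it) (insubT (gtn t) jt); apply: b_mono.
by rewrite /b' /be (insubT (gtn t) it).
Qed.

Definition set_row (T : Type) (m n : nat) (X : 'M[T]_(m, n)) (r : 'I_m)
    (u : 'rV[T]_n) : 'M[T]_(m, n) :=
  \matrix_(i, j) if i == r then u 0 j else X i j.

Section SetRow.
Variables (T : Type) (m n : nat) (X : 'M[T]_(m, n)) (r : 'I_m).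

Lemma row_set_row u : row r (set_row X r u) = u.
Proof. by apply/rowP => j; rewrite !mxE eqxx. Qed.

Lemma row_set_row_neq u i : i != r -> row i (set_row X r u) = row i X.
Proof. by move=> /negbTE ir; apply/rowP => j; rewrite !mxE ir. Qed.

Lemma row'_set_row u : row' r (set_row X r u) = row' r X.
Proof. by apply/matrixP => i j; rewrite !mxE eq_sym (negbTE (neq_lift r i)). Qed.

Lemma set_row_id : set_row X r (row r X) = X.
Proof. by apply/matrixP => i j; rewrite !mxE; case: eqP => // ->. Qed.

End SetRow.

Lemma det_set_row_lin (R : comNzRingType) (n : nat) (X : 'M[R]_n) (r : 'I_n)
    (c e : R) (u w : 'rV[R]_n) :
  \det (set_row X r (c *: u + e *: w)) =
    c * \det (set_row X r u) + e * \det (set_row X r w).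
Proof.
apply: (@determinant_multilinear _ _ _ _ _ r);
  by rewrite ?row_set_row ?row'_set_row.
Qed.

Section DetWithSpanningRows.
Variables (R : comNzRingType) (t : nat) (I : R -> Prop).
Hypothesis I0 : I 0.
Hypothesis I_lin : forall c e x y, I x -> I y -> I (c * x + e * y).
Variables (K : 'rV[R]_t -> Prop) (v : 'I_t -> 'rV[R]_t).
Hypothesis v_span : forall u, exists c : 'I_t -> R, K (u - \sum_i c i *: v i).
Hypothesis I_det_gen_or_K :
  forall X, (forall i, row i X = v i \/ K (row i X)) -> I (\det X).

Lemma I_scale c x : I x -> I (c * x).
Proof. by move=> Ix; have := I_lin c 0 Ix Ix; rewrite mul0r addr0. Qed.

Lemma I_det_set_row_sum X r (F : 'I_t -> 'rV[R]_t) (c : 'I_t -> R) :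
  (forall i, I (\det (set_row X r (F i)))) ->
  I (\det (set_row X r (\sum_i c i *: F i))).
Proof.
move=> IF; elim/big_rec: _ => [|i u _ Iu].
  have := det_set_row_lin X r 0 0 0 0.
  by rewrite scale0r addr0 !mul0r addr0 => ->.
by rewrite -[u]scale1r det_set_row_lin; apply: I_lin.
Qed.

Definition rows_gen_or_K (r : nat) (X : 'M[R]_t) (sigma : 'S_t) :=
  forall j : 'I_t, (j < r)%N -> row j X = v (sigma j) \/ K (row j X).

Lemma I_det_rows_gen_or_K X sigma : rows_gen_or_K t X sigma -> I (\det X).
Proof.
move=> genX; pose Y := row_perm (sigma^-1)%g X.
have -> : X = row_perm sigma Y by rewrite -row_permM mulgV row_perm1.
rewrite row_permE det_mulmx; apply: I_scale; apply: I_det_gen_or_K => i.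
have -> : row i Y = row ((sigma^-1)%g i) X by apply/rowP => j; rewrite !mxE.
by rewrite -[in v i](permKV sigma i); apply: genX.
Qed.

Lemma I_det_rows_gen_or_K_step r : (r < t)%N ->
  (forall X sigma, rows_gen_or_K r.+1 X sigma -> I (\det X)) ->
  forall X sigma, rows_gen_or_K r X sigma -> I (\det X).
Proof.
move=> lt_rt IH X sigma genX; pose r' := Ordinal lt_rt.
have lt_r (j : 'I_t) : (j < r.+1)%N -> j != r' -> (j < r)%N.
  by rewrite ltnS leq_eqVlt => /orP[/eqP jr /eqP[]|//]; exact: val_inj.
have [c Kc] := v_span (row r' X).
have split_row :
    row r' X = 1 *: (row r' X - \sum_i c i *: v i) + 1 *: \sum_i c i *: v i.
  by rewrite !scale1r subrK.
rewrite -(set_row_id X r') split_row det_set_row_lin.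
apply: I_lin.
  apply: (IH _ sigma) => j lt_j; case: (eqVneq j r') => [->|jr].
    by right; rewrite row_set_row.
  by rewrite row_set_row_neq //; apply/genX/lt_r.
apply: I_det_set_row_sum => i; pose j0 := (sigma^-1 i)%g.
have sigma_j0 : sigma j0 = i by rewrite permKV.
(* Either row j0 already equals v i, and the determinant has two equal rows,
   or swapping j0 and r' in sigma labels the new row r' by i. *)
case: (boolP ((j0 < r)%N && (row j0 X == v i))).
  move=> /andP[lt_j0 /eqP row_j0].
  have j0r : j0 != r' by rewrite -val_eqE neq_ltn lt_j0.
  rewrite (determinant_alternate j0r) // => k.
  by rewrite !mxE eqxx (negbTE j0r) -row_j0 mxE.
move=> not_v.
apply: (IH _ (tperm r' j0 * sigma)%g) => j lt_j; rewrite permM.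
case: (eqVneq j r') => [->|jr].
  by left; rewrite row_set_row tpermL sigma_j0.
have lt_jr := lt_r j lt_j jr; rewrite row_set_row_neq //.
case: (eqVneq j j0) => [ej|jj0].
  case: (genX j lt_jr) => [row_j|]; last by right.
  by move: not_v; rewrite -ej lt_jr row_j ej sigma_j0 eqxx.
by rewrite tpermD 1?eq_sym //; apply: genX.
Qed.

Lemma I_det_spanning (X : 'M[R]_t) : I (\det X).
Proof.
suff I_det_rows_from k :
    forall (Y : 'M[R]_t) sigma, rows_gen_or_K (t - k) Y sigma -> I (\det Y).
  by apply: (I_det_rows_from t X 1%g) => j; rewrite subnn.
elim: k => [|k IH]; first by rewrite subn0; exact: I_det_rows_gen_or_K.
rewrite subnS; case: (leqP t k) => [le_tk|lt_kt].
  have /eqP tk0 : (t - k == 0)%N by rewrite subn_eq0.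
  by rewrite tk0 in IH *.
have pos_tk : (0 < t - k)%N by rewrite subn_gt0.
apply: I_det_rows_gen_or_K_step; last by rewrite prednK.
by rewrite -ltnS prednK // ltnS leq_subr.
Qed.

End DetWithSpanningRows.

Lemma quotient_lifts (R : comNzRingType) (p t : nat) (a : 'I_t -> nat)
    (K : 'rV[R]_t -> Prop) (phi : 'rV[R]_t -> 'rV[R]_t) :
  (forall u w, phi (u + w) = phi u + phi w) ->
  (forall (c : R) u, phi (c *: u) = c *: phi u) ->
  (forall y, exists u, in_diag_sub p a (phi u - y)) ->
  (forall u, in_diag_sub p a (phi u) <-> K u) ->
  exists v : 'I_t -> 'rV[R]_t,
    (forall i, K ((p%:R : R) ^+ a i *: v i)) /\
    (forall u, exists c : 'I_t -> R, K (u - \sum_i c i *: v i)).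
Proof.
move=> phiD phiZ phi_onto phiK.
have phiN u : phi (- u) = - phi u by rewrite -scaleN1r phiZ scaleN1r.
have phi_sum (c : 'I_t -> R) (F : 'I_t -> 'rV[R]_t) :
    phi (\sum_i c i *: F i) = \sum_i c i *: phi (F i).
  elim/big_rec2: _ => [|i x y _ <-]; last by rewrite phiD phiZ.
  by have := phiZ 0 0; rewrite !scale0r.
have [v dv] := fin_all_exists (fun i : 'I_t => phi_onto (delta_mx 0 i)).
exists v; split=> [i|u].
  apply/phiK => j; rewrite phiZ mxE.
  case: (eqVneq j i) => [->|ji]; first by exists (phi (v i) 0 i).
  by apply: dvdr_mull; have := dv i j; rewrite !mxE (negbTE ji) subr0.
exists (fun i => phi u 0 i); apply/phiK => j.
rewrite phiD phiN phi_sum {1}(row_sum_delta (phi u)) -sumrB summxE.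
apply: dvdr_sum => i _; rewrite -scalerBr -opprB mxE; apply: dvdr_mull.
by rewrite mxE; apply/dvdrN/dv.
Qed.

Lemma scaled_row_dvdr (R : idomainType) (m : nat) (q : R) (k l : nat)
    (u w : 'rV[R]_m) :
  q != 0 -> (k <= l)%N -> q ^+ k *: u = q ^+ l *: w ->
  forall j, divr (q ^+ (l - k)) (u 0 j).
Proof.
move=> q_neq0 le_kl scaled j; exists (w 0 j).
apply: (mulfI (expf_neq0 k q_neq0)); rewrite mulrA -exprD subnKC //.
by have := congr1 (fun z : 'rV[R]_m => z 0 j) scaled; rewrite !mxE.
Qed.

Theorem lemma4p2 (p : nat) (R : idomainType) (hOp : is_Op p R)
  (t : nat) (xi : 'M[R]_t) (K : 'rV[R]_t -> Prop) (n : nat) (a : 'I_t -> nat)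
  (* K is an O_p[xi]-submodule of L *)
  (hK0 : K 0)
  (hKD : forall v w, K v -> K w -> K (v + w))
  (hKZ : forall (c : R) v, K v -> K (c *: v))
  (hKxi : forall v, K v -> K (v *m xi))
  (* xi(K) ⊆ p^n L *)
  (hxiK : forall v, K v -> exists w : 'rV[R]_t, v *m xi = (p%:R : R) ^+ n *: w)
  (* n >= a_1 >= a_2 >= ... >= a_t >= 0 *)
  (ha_n : forall i : 'I_t, (a i <= n)%N)
  (ha_dec : forall i j : 'I_t, (i <= j)%N -> (a j <= a i)%N)
  (* L/K ≅ ⊕_i O_p/p^{a_i}: an O_p-linear map phi : L -> O_p^t whose composite
     with the projection O_p^t -> ⊕_i O_p/p^{a_i} is surjective with kernel K *)
  (hquot : exists phi : 'rV[R]_t -> 'rV[R]_t,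
      [/\ forall v w, phi (v + w) = phi v + phi w,
          forall (c : R) v, phi (c *: v) = c *: phi v,
          forall y, exists v, in_diag_sub p a (phi v - y)
        & forall v, in_diag_sub p a (phi v) <-> K v]) :
  forall s : nat, (s <= t)%N ->
    divr ((p%:R : R) ^+ (\sum_(i < t | (i < s)%N) (n - a i)%N))
         ((char_poly xi)`_(t - s)).
Proof.
move=> s le_st; have [_ [p_neq0 _] _ _ _] := hOp.
have [phi [phiD phiZ phi_onto phiK]] := hquot.
have [v [Kv v_span]] := quotient_lifts phiD phiZ phi_onto phiK.
pose B := (\sum_(i < t | (i < s)%N) (n - a i))%N.
pose I x := divr ((p%:R : R) ^+ B) (x * (char_poly xi)`_(t - s)).
suff : I (\det (1%:M : 'M[R]_t)) by rewrite /I det1 mul1r.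
apply: (@I_det_spanning R t I _ _ K v v_span) => [|c e x y Ix Iy|X rowsX].
- by rewrite /I mul0r; apply: dvdr0.
- by rewrite /I mulrDl -!mulrA; apply: dvdrD; apply: dvdr_mull.
apply: det_mul_char_poly_coef_dvdr => // [i j le_ij|i j].
  by rewrite leq_sub2l // ha_dec.
have Krow : K ((p%:R : R) ^+ a i *: row i X).
  by case: (rowsX i) => [->|]; [exact: Kv | exact: hKZ].
have [w xi_row] := hxiK _ Krow.
have -> : (X *m xi) i j = (row i X *m xi) 0 j by rewrite -row_mul !mxE.
by apply: scaled_row_dvdr p_neq0 (ha_n i) _ _; rewrite scalemxAl xi_row.
Qed.
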